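(* Let $\mathbf{A}\in\mathbb{R}^{n\times n}$ be positive semidefinite and let $\mathbf{u}\in\mathbb{R}^n$ satisfy $\mathbf{u}\not\perp\mathrm{Ker}(\mathbf{A})$. Then $\mathrm{Det}(\mathbf{A}+\mathbf{u}\mathbf{u}^\top)\ge\lambda_{\min}(\mathbf{A}+\mathbf{u}\mathbf{u}^\top)\,\mathrm{Det}(\mathbf{A})$.
   Context: $\mathrm{Det}(\mathbf{M})$ is the product of the nonzero eigenvalues of $\mathbf{M}$ (with $\mathrm{Det}(\mathbf{O})=1$). $\lambda_{\min}(\mathbf{M})$ denotes the smallest nonzero eigenvalue of $\mathbf{M}$. $\mathbf{u}\not\perp\mathrm{Ker}(\mathbf{A})$ means there is $\mathbf{y}\in\mathrm{Ker}(\mathbf{A})$ with $\mathbf{u}^\top\mathbf{y}\ne0$. *)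

From HB Require Import structures.
From mathcomp Require Import all_boot all_order all_algebra.
Set Implicit Arguments. Unset Strict Implicit. Unset Printing Implicit Defensive.
Import Order.TTheory GRing.Theory Num.Theory.
Local Open Scope ring_scope.

Definition psd (R : realFieldType) (n : nat) (A : 'M[R]_n) : Prop :=
  A^T = A /\ forall x : 'cV[R]_n, 0 <= (x^T *m A *m x) 0 0.

Definition eigenvalues_list (R : comNzRingType) (n : nat) (M : 'M[R]_n) (s : seq R) : Prop :=
  char_poly M = \prod_(x <- s) ('X - x%:P).

(* Det(M): product of the nonzero eigenvalues (1 if none). *)
Definition pdet (R : numDomainType) (s : seq R) : R := \prod_(x <- s | x != 0) x.

(* lambda_min(M): smallest nonzero eigenvalue (0 by convention if none). *)
Definition lmin_nz (R : realDomainType) (s : seq R) : R :=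
  head 0 (sort <=%R [seq x <- s | x != 0]).

Definition not_perp_ker (R : pzRingType) (n : nat) (A : 'M[R]_n) (u : 'cV[R]_n) : Prop :=
  exists y : 'cV[R]_n, A *m y = 0 /\ (u^T *m y) 0 0 != 0.

From HB Require Import structures.
From mathcomp Require Import all_boot all_order all_algebra.
From mathcomp Require Import ring zify.
Set Implicit Arguments. Unset Strict Implicit. Unset Printing Implicit Defensive.
Import Order.TTheory GRing.Theory Num.Theory.
Local Open Scope ring_scope.

(* Split u = A^(k+1) v + y, where k+1 is the multiplicity of the eigenvalue 0
   of A and A y = 0; then y is the orthogonal projection of u on Ker A, it is
   nonzero because u is not orthogonal to Ker A, and we put c = |y|^2.
   Expanding det(X - A - u u^T) with the matrix determinant lemma, and using
   that adj(X - A) acts on Ker A as char_A(X)/X while adj(X - A) A^(k+1) is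
   divisible by X^(k+1), shows that the multiplicity of 0 drops by one and
   that Det(A + u u^T) = c Det(A).  Moreover y lies in the range of
   B = A + u u^T and y^T B y = c^2, so the Rayleigh bound
   lambda_min |y|^2 <= y^T B y gives lambda_min <= c.  The Rayleigh bound is
   proved without the spectral theorem: a vector in the range of B is killed
   by the product of the B - lambda over the nonzero eigenvalues lambda, and
   peeling off one eigenvector at a time, orthogonally, shows that the
   quadratic form of a symmetric matrix is nonnegative on any vector killed
   by a product of factors C - a with a >= 0. *)

Section SymmetricMatrices.
Variable R : realFieldType.

Lemma dotmx_ge0 k (x : 'cV[R]_k) : 0 <= (x^T *m x) 0 0.
Proof. by rewrite mxE; apply: sumr_ge0 => i _; rewrite mxE sqr_ge0. Qed.

Lemma dotmx_eq0 k (x : 'cV[R]_k) : ((x^T *m x) 0 0 == 0) = (x == 0).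
Proof.
apply/idP/eqP => [/eqP|->]; last by rewrite mulmx0 mxE.
rewrite mxE => /psumr_eq0P x0; apply/matrixP => i j; rewrite (ord1 j) mxE.
have /eqP : x^T 0 i * x i 0 = 0 by apply: x0 => // l _; rewrite mxE sqr_ge0.
by rewrite mxE mulf_eq0 orbb => /eqP.
Qed.

Lemma dotmx_gt0 k (x : 'cV[R]_k) : (0 < (x^T *m x) 0 0) = (x != 0).
Proof. by rewrite lt0r dotmx_eq0 dotmx_ge0 andbT. Qed.

Lemma sym_mulmx_ker k (M : 'M[R]_k) (v : 'cV[R]_k) :
  M^T = M -> M *m (M *m v) = 0 -> M *m v = 0.
Proof.
move=> symM MMv; apply/eqP; rewrite -dotmx_eq0.
by rewrite trmx_mul symM -mulmxA MMv mulmx0 mxE.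
Qed.

Lemma sym_expmx_ker k (M : 'M[R]_k.+1) (v : 'cV[R]_k.+1) j :
  M^T = M -> M ^+ j *m v = 0 -> M *m v = 0.
Proof.
move=> symM; elim: j v => [|j IHj] v; first by rewrite expr0 mul1mx => ->; rewrite mulmx0.
rewrite exprSr -[_ * M]/(_ *m M) -mulmxA => /IHj; exact: sym_mulmx_ker.
Qed.

Lemma sym_ker_range k (M : 'M[R]_k) (v w : 'cV[R]_k) :
  M^T = M -> M *m v = 0 -> v = M *m w -> v = 0.
Proof. by move=> symM Mv vE; rewrite vE in Mv *; exact: sym_mulmx_ker. Qed.

Lemma sym_submx k (M : 'M[R]_k) a : M^T = M -> (M - a%:M)^T = M - a%:M.
Proof. by move=> symM; rewrite linearB /= symM tr_scalar_mx. Qed.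

End SymmetricMatrices.

Section HornerMx.
Variables (R : comNzRingType) (k : nat) (C : 'M[R]_k.+1).

Lemma horner_mx_XsubC a : horner_mx C ('X - a%:P) = C - a%:M.
Proof. by rewrite rmorphB /= horner_mx_X horner_mx_C. Qed.

Lemma horner_mx_Xn j : horner_mx C 'X^j = C ^+ j.
Proof. by rewrite rmorphXn /= horner_mx_X. Qed.

Lemma horner_mx_mulmx p q (y : 'cV[R]_k.+1) :
  horner_mx C p *m (horner_mx C q *m y) = horner_mx C (p * q) *m y.
Proof. by rewrite mulmxA rmorphM. Qed.

End HornerMx.

Section NonnegativeRoots.
Variables (R : realFieldType) (k : nat) (C : 'M[R]_k.+1).
Hypothesis symC : C^T = C.

Lemma eigen_split (g : {poly R}) a (y : 'cV[R]_k.+1) :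
  g.[a] != 0 -> (C - a%:M) *m (horner_mx C g *m y) = 0 ->
  exists y1 y2 w, [/\ y = y1 + y2, y1 = (C - a%:M) *m w,
                      horner_mx C g *m y1 = 0 & C *m y2 = a *: y2].
Proof.
move=> ga0 Cgy.
have /factor_theorem [q gE] : root (g - g.[a]%:P) a.
  by rewrite /root hornerD hornerN hornerC subrr.
pose y2 := g.[a]^-1 *: (horner_mx C g *m y).
pose w := - g.[a]^-1 *: (horner_mx C q *m y).
have y1E : y - y2 = (C - a%:M) *m w.
  rewrite -scalemxAr -horner_mx_XsubC horner_mx_mulmx mulrC -gE rmorphB /=.
  rewrite horner_mx_C mulmxBl mul_scalar_mx scalerBr scalerA mulNr mulVf //.
  by rewrite scaleN1r opprK addrC scaleNr.
exists (y - y2), y2, w; split=> //; first by rewrite subrK.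
- rewrite y1E /w -!scalemxAr.
  have -> : horner_mx C g *m ((C - a%:M) *m (horner_mx C q *m y)) =
      horner_mx C q *m ((C - a%:M) *m (horner_mx C g *m y)).
    rewrite -horner_mx_XsubC !horner_mx_mulmx.
    by rewrite [in LHS]mulrAC [in RHS]mulrAC [g * q]mulrC.
  by rewrite Cgy mulmx0 scaler0.
- apply/eqP; rewrite -subr_eq0 -mul_scalar_mx -mulmxBl.
  by rewrite -scalemxAr Cgy scaler0.
Qed.

Lemma quad_form_eigen_split a (y1 y2 w : 'cV[R]_k.+1) :
  y1 = (C - a%:M) *m w -> C *m y2 = a *: y2 ->
  ((y1 + y2)^T *m C *m (y1 + y2)) 0 0 =
    (y1^T *m C *m y1) 0 0 + a * (y2^T *m y2) 0 0.
Proof.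
move=> y1E Cy2.
have y1y2 : y1^T *m y2 = 0.
  by rewrite y1E trmx_mul sym_submx // -mulmxA mulmxBl mul_scalar_mx Cy2 subrr mulmx0.
have y2y1 : y2^T *m y1 = 0 by rewrite -[y1]trmxK -trmx_mul y1y2 trmx0.
have y2C : y2^T *m C = a *: y2^T by rewrite -symC -trmx_mul Cy2 linearZ.
rewrite [(y1 + y2)^T]linearD /= !mulmxDl !mulmxDr -!mulmxA Cy2 -!scalemxAr y1y2.
rewrite !mulmxA y2C.
by rewrite -scalemxAl y2y1 !scaler0 addr0 add0r !mxE.
Qed.

Lemma quad_form_ge0_nonneg_roots (t : seq R) (y : 'cV[R]_k.+1) :
  all (fun a => 0 <= a) t ->
  horner_mx C (\prod_(a <- t) ('X - a%:P)) *m y = 0 -> 0 <= (y^T *m C *m y) 0 0.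
Proof.
elim: t y => [|a t IHt] y /=.
  by rewrite big_nil rmorph1 mul1mx => _ ->; rewrite mulmx0 mxE.
case/andP=> a_ge0 t_ge0; rewrite big_cons -horner_mx_mulmx horner_mx_XsubC.
set g := \prod_(b <- t) _ => Cgy.
have [a_in_t|a_notin_t] := boolP (a \in t).
  apply: (IHt _ t_ge0); move: Cgy.
  rewrite /g (perm_big _ (perm_to_rem a_in_t)) big_cons -horner_mx_mulmx.
  by rewrite horner_mx_XsubC; apply: sym_mulmx_ker; exact: sym_submx.
have ga0 : g.[a] != 0 by rewrite -/(root g a) root_prod_XsubC.
have [y1 [y2 [w [-> y1E gy1 Cy2]]]] := eigen_split ga0 Cgy.
rewrite (quad_form_eigen_split y1E Cy2).
by rewrite addr_ge0 ?(IHt _ t_ge0) // mulr_ge0 ?dotmx_ge0.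
Qed.

End NonnegativeRoots.

Section EigenvalueLists.
Variable R : realFieldType.
Implicit Types s : seq R.

Definition nzroot_poly s := \prod_(x <- s | x != 0) ('X - x%:P).

Lemma prod_XsubC_split s :
  \prod_(x <- s) ('X - x%:P) = 'X^(count (pred1 0) s) * nzroot_poly s.
Proof.
rewrite /nzroot_poly; elim: s => [|x s IHs]; first by rewrite !big_nil expr0 mulr1.
rewrite !big_cons IHs /=; case: eqP => [->|_] /=.
  by rewrite subr0 add1n exprS mulrA.
by rewrite add0n mulrCA.
Qed.

Lemma pdet_neq0 s : pdet s != 0.
Proof. by rewrite /pdet prodf_seq_neq0; apply/allP => x _; case: (x != 0). Qed.

Lemma nzroot_poly_horner0 s :
  (nzroot_poly s).[0] = (-1) ^+ (count (predC1 0) s) * pdet s.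
Proof.
rewrite /nzroot_poly /pdet; elim: s => [|x s IHs].
  by rewrite !big_nil hornerC mulr1.
rewrite !big_cons /=; case: eqP => [_|_] /=; first by rewrite add0n.
by rewrite hornerM IHs hornerXsubC add1n exprS sub0r mulrACA mulN1r.
Qed.

Lemma nzroot_poly_horner0_neq0 s : (nzroot_poly s).[0] != 0.
Proof. by rewrite nzroot_poly_horner0 mulf_neq0 ?signr_eq0 ?pdet_neq0. Qed.

Lemma Xn_mul_inj (c j : nat) (g h : {poly R}) : 'X^c * g = 'X^j * h ->
  g.[0] != 0 -> h.[0] != 0 -> c = j /\ g = h.
Proof.
wlog le_cj : c j g h / (c <= j)%N.
  move=> W E g0 h0; case: (leqP c j) => [le_cj|/ltnW le_jc]; first exact: W.
  by have [-> ->] := W _ _ _ _ le_jc (esym E) h0 g0.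
move=> E g0 h0.
have gE : g = 'X^(j - c) * h.
  apply: (mulfI (expf_neq0 c (negbT (polyX_eq0 R)))).
  by rewrite E mulrA -exprD subnKC.
case: (posnP (j - c)) => [jc0|jc_gt0].
  split; last by rewrite gE jc0 mul1r.
  by apply/eqP; rewrite eqn_leq le_cj -subn_eq0 jc0.
by move: g0; rewrite gE hornerM hornerXn expr0n (gtn_eqF jc_gt0) mul0r eqxx.
Qed.

Lemma pdet_Xn_factor s j (g : {poly R}) :
  \prod_(x <- s) ('X - x%:P) = 'X^j * g -> g.[0] != 0 ->
  (j <= size s)%N /\ g.[0] = (-1) ^+ (size s - j) * pdet s.
Proof.
move=> sE g0; have [<- <-] := Xn_mul_inj (etrans (esym (prod_XsubC_split s)) sE)
  (nzroot_poly_horner0_neq0 s) g0.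
split; first exact: count_size.
rewrite nzroot_poly_horner0 -(count_predC (pred1 0) s) addKn.
by congr (_ ^+ _ * _); apply: eq_count.
Qed.

End EigenvalueLists.

Lemma range_rayleigh_ge (R : realFieldType) k (B : 'M[R]_k.+1) (s : seq R) (mu : R)
    (y w : 'cV[R]_k.+1) :
  B^T = B -> eigenvalues_list B s -> (forall x, x \in s -> x != 0 -> mu <= x) ->
  y = B *m w -> mu * (y^T *m y) 0 0 <= (y^T *m B *m y) 0 0.
Proof.
move=> symB sE mu_le yE.
set g := nzroot_poly s.
have gBy0 : horner_mx B g *m y = 0.
  apply: (sym_ker_range (w := horner_mx B g *m w) symB).
    apply: (sym_expmx_ker (j := count (pred1 0) s) symB).
    by rewrite -horner_mx_Xn horner_mx_mulmx -prod_XsubC_split -sE Cayley_Hamilton mul0mx.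
  rewrite yE -{2}(horner_mx_X B) !horner_mx_mulmx.
  by rewrite mulrC rmorphM /= horner_mx_X mulmxA.
pose t := [seq x - mu | x <- s & x != 0].
have t_ge0 : all (fun a => 0 <= a) t.
  apply/allP => a /mapP [x]; rewrite mem_filter => /andP [x0 xs] ->.
  by rewrite subr_ge0 mu_le.
have Bmu_t : horner_mx (B - mu%:M) (\prod_(a <- t) ('X - a%:P)) = horner_mx B g.
  rewrite !rmorph_prod /= big_map big_filter; apply: eq_bigr => x _.
  by rewrite !horner_mx_XsubC raddfB opprB addrA subrK.
have Bmu_ty : horner_mx (B - mu%:M) (\prod_(a <- t) ('X - a%:P)) *m y = 0.
  by rewrite Bmu_t.
have := quad_form_ge0_nonneg_roots (sym_submx mu symB) t_ge0 Bmu_ty.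
by rewrite mulmxBr mulmxBl mul_mx_scalar -scalemxAl !mxE subr_ge0.
Qed.

Lemma lmin_nz_le (R : realDomainType) (s : seq R) x :
  x \in s -> x != 0 -> lmin_nz s <= x.
Proof.
move=> xs x0; rewrite /lmin_nz.
have : x \in sort <=%R [seq x <- s | x != 0] by rewrite mem_sort mem_filter x0.
have := sort_sorted (@le_total _ R) [seq x <- s | x != 0].
case: (sort _ _) => [//|h t] /= st; rewrite inE => /orP [/eqP -> //|xt].
by have /allP := order_path_min (@le_trans _ R) st; apply.
Qed.

Lemma det_sub_rank1 (T : idomainType) k (M : 'M[T]_k) (U : 'cV[T]_k) :
  \det M != 0 -> \det (M - U *m U^T) = \det M - (U^T *m \adj M *m U) 0 0.
Proof.
(* Both Schur complements of the bordered matrix N = [1, U^T; U, M]. *)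
move=> detM0; pose N := block_mx (1%:M : 'M[T]_1) U^T U M.
have detN : \det N = \det (M - U *m U^T).
  have -> : N = block_mx 1%:M 0 U 1%:M *m block_mx 1%:M U^T 0 (M - U *m U^T).
    by rewrite mulmx_block !mul1mx !mul0mx !mulmx1 ?mulmx0 ?addr0 ?add0r addrC subrK.
  by rewrite det_mulmx det_lblock det_ublock !det1 !mul1r.
apply: (mulIf detM0); rewrite -detN.
have : N *m block_mx ((\det M)%:M : 'M_1) 0 (- (\adj M *m U)) 1%:M =
    block_mx ((\det M)%:M - U^T *m \adj M *m U) U^T 0 M.
  rewrite mulmx_block !mul1mx ?mulmx0 !mulmx1 ?add0r ?addr0.
  by rewrite !mulmxN !mulmxA mul_mx_adj scalar_mxC subrr.
move/(congr1 determinant); rewrite det_mulmx det_lblock det_ublock det1 mulr1.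
by rewrite !det_mx11 !mxE /= mulr1n.
Qed.

Section CharPolyAdjugate.
Variables (R : idomainType) (k : nat) (A : 'M[R]_k.+1).
Local Notation K := (\adj (char_poly_mx A)).

Lemma adj_char_poly_mx_range j (f : {poly R}) (v : 'cV[R]_k.+1) :
  char_poly A = 'X^j * f ->
  exists V, K *m map_mx polyC (A ^+ j *m v) = 'X^j *: V.
Proof.
move=> charA.
have KA : K *m map_mx polyC A = 'X *: K - char_poly A *: 1%:M.
  have := mul_adj_mx (char_poly_mx A).
  rewrite /char_poly_mx mulmxBr mul_mx_scalar => /eqP; rewrite subr_eq => /eqP ->.
  by rewrite -/(char_poly A) scalemx1 addrAC subrr add0r.
have [S KAj] : exists S, K *m map_mx polyC (A ^+ j) = 'X^j *: K - char_poly A *: S.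
  elim: (j) => [|i [S IHi]].
    by exists 0; rewrite expr0 map_mx1 mulmx1 scaler0 subr0 expr0 scale1r.
  exists ('X^i *: 1%:M + S *m map_mx polyC A).
  rewrite exprSr map_mxM mulmxA IHi mulmxBl -!scalemxAl KA.
  rewrite scalerBr scalerA -exprSr scalerA mulrC -scalerA.
  by rewrite scalerDr opprD addrA scalemxAl.
exists (K *m map_mx polyC v - f *: (S *m map_mx polyC v)).
by rewrite map_mxM mulmxA KAj charA mulmxBl -!scalemxAl scalerBr scalerA.
Qed.

Lemma adj_char_poly_mx_ker (y : 'cV[R]_k.+1) m (f : {poly R}) :
  A *m y = 0 -> char_poly A = 'X^(m.+1) * f ->
  K *m map_mx polyC y = ('X^m * f) *: map_mx polyC y.
Proof.
move=> Ay charA.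
have My : char_poly_mx A *m map_mx polyC y = 'X *: map_mx polyC y.
  by rewrite /char_poly_mx mulmxBl -map_mxM Ay map_mx0 subr0 mul_scalar_mx.
have := mul_adj_mx (char_poly_mx A); rewrite -/(char_poly A).
move/(congr1 (mulmx^~ (map_mx polyC y))).
rewrite -mulmxA My -scalemxAr mul_scalar_mx charA exprS -mulrA -scalerA => E.
apply/matrixP => i j; move/matrixP/(_ i j): E; rewrite !mxE.
by apply: mulfI; rewrite polyX_eq0.
Qed.

End CharPolyAdjugate.

Section PositiveSemidefinite.
Variables (R : realFieldType) (k : nat) (A : 'M[R]_k) (s : seq R).
Hypotheses (psdA : psd A) (sA : eigenvalues_list A s).

Lemma psd_eigen_ge0 x : x \in s -> 0 <= x.
Proof.
move: psdA => [symA qA] xs.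
have : eigenvalue A x by rewrite eigenvalue_root_char sA root_prod_XsubC.
move/eigenvalueP => [v vA v0].
have := qA v^T; rewrite trmxK vA -scalemxAl mxE.
have vv_gt0 : 0 < (v *m v^T) 0 0.
  by rewrite -[X in X *m _]trmxK dotmx_gt0 trmx_eq0.
by rewrite pmulr_lge0.
Qed.

Lemma psd_pdet_ge0 : 0 <= pdet s.
Proof.
rewrite /pdet big_seq_cond; apply: prodr_ge0 => x /andP [xs _].
exact: psd_eigen_ge0.
Qed.

Lemma psd_ker_eigen0 (z : 'cV[R]_k) : A *m z = 0 -> z != 0 -> 0 \in s.
Proof.
move: psdA => [symA _] Az z0; rewrite -root_prod_XsubC -sA -eigenvalue_root_char.
apply/eigenvalueP; exists z^T; last by rewrite trmx_eq0.
by rewrite scale0r -symA -trmx_mul Az trmx0.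
Qed.

End PositiveSemidefinite.

Section RankOneUpdate.
Variables (R : realFieldType) (n k : nat) (A : 'M[R]_n.+1) (u : 'cV[R]_n.+1).
Variable f : {poly R}.
Hypotheses (symA : A^T = A) (charA : char_poly A = 'X^(k.+1) * f) (f0 : f.[0] != 0).
Local Notation B := (A + u *m u^T).

Lemma ker_range_decomposition (x : 'cV[R]_n.+1) :
  exists v y, x = A ^+ k.+1 *m v + y /\ A *m y = 0.
Proof.
have : coprimep 'X^(k.+1) f.
  by apply: coprimep_expl; rewrite coprimep_sym coprimepX /root.
case/Bezout_eq1_coprimepP => -[a b] /= abE.
exists (horner_mx A a *m x), (horner_mx A (b * f) *m x); split.
  rewrite -horner_mx_Xn !horner_mx_mulmx -mulmxDl -rmorphD.
  by rewrite [_ * a]mulrC abE rmorph1 mul1mx.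
apply: (sym_expmx_ker (j := k.+1) symA).
rewrite -horner_mx_Xn horner_mx_mulmx mulrCA -charA rmorphM /=.
by rewrite Cayley_Hamilton mulr0 mul0mx.
Qed.

Variables (v y : 'cV[R]_n.+1).
Hypotheses (uE : u = A ^+ k.+1 *m v + y) (Ay : A *m y = 0).
Let c := (y^T *m y) 0 0.

Lemma tr_u_ker (x : 'cV[R]_n.+1) : A *m x = 0 -> u^T *m x = y^T *m x.
Proof.
move=> Ax; rewrite uE linearD /= mulmxDl exprS -[A * _]/(A *m _) -mulmxA.
by rewrite trmx_mul symA -mulmxA Ax mulmx0 add0r.
Qed.

Lemma tr_u_y : u^T *m y = c%:M.
Proof. by rewrite tr_u_ker // [LHS]mx11_scalar. Qed.

Lemma char_poly_rank1_update : exists r : {poly R},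
  char_poly B = 'X^k * ('X * f - c%:P * f - 'X * r).
Proof.
pose U := map_mx polyC u.
have [V KW] := adj_char_poly_mx_range v charA.
have KU : \adj (char_poly_mx A) *m U = 'X^(k.+1) *: V + ('X^k * f) *: map_mx polyC y.
  by rewrite /U uE map_mxD mulmxDr KW (adj_char_poly_mx_ker Ay charA).
have UY : U^T *m map_mx polyC y = (c%:P)%:M.
  by rewrite /U map_trmx -map_mxM tr_u_y map_scalar_mx.
have charB : char_poly_mx B = char_poly_mx A - U *m U^T.
  by rewrite /char_poly_mx map_mxD map_mxM map_trmx opprD addrA.
exists ((U^T *m V) 0 0).
rewrite /char_poly charB det_sub_rank1 ?(monic_neq0 (char_poly_monic A)) //.
rewrite -/(char_poly A) -mulmxA KU mulmxDr -!scalemxAr UY !mxE charA exprS eqxx mulr1n.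
by ring.
Qed.

Hypothesis y0 : y != 0.

Lemma rank1_update_range : exists w, y = B *m w.
Proof.
have c0 : c != 0 by rewrite /c dotmx_eq0.
(* B y = c u, and B (A^k v) = A^(k+1) v + t u. *)
pose t := (u^T *m (A ^+ k *m v)) 0 0.
exists ((c^-1 * (1 + t)) *: y - A ^+ k *m v).
rewrite mulmxBr -scalemxAr mulmxDl Ay add0r -mulmxA tr_u_y mul_mx_scalar.
rewrite scalerA mulrAC mulVf // mul1r mulmxDl -mulmxA [u^T *m _]mx11_scalar.
rewrite mul_mx_scalar (mulmxA A) -[A *m _]/(A * A ^+ k) -exprS.
rewrite scalerDl scale1r opprD addrACA subrr addr0.
by rewrite uE addrC addKr.
Qed.

Lemma pdet_rank1_update (sA sB : seq R) :
  eigenvalues_list A sA -> eigenvalues_list B sB -> pdet sB = c * pdet sA.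
Proof.
move=> sAE sBE; have [r charB] := char_poly_rank1_update.
set h := _ - _ - _ in charB.
have h0 : h.[0] = - (c * f.[0]) by rewrite /h !hornerE; ring.
have h0_neq0 : h.[0] != 0 by rewrite h0 oppr_eq0 mulf_neq0 // /c dotmx_eq0.
have [leA fE] := pdet_Xn_factor (etrans (esym sAE) charA) f0.
have [_ hE] := pdet_Xn_factor (etrans (esym sBE) charB) h0_neq0.
have sizeB : size sB = size sA.
  move: (size_char_poly A) (size_char_poly B).
  by rewrite sAE sBE !size_prod_XsubC => -[->] [->].
have sizeE : (size sB - k = (size sA - k.+1).+1)%N by lia.
move: hE; rewrite sizeE h0 fE exprS mulN1r mulrCA -mulNr => /eqP.
by rewrite !mulNr eqr_opp (inj_eq (mulfI (negbT (signr_eq0 _ _)))) => /eqP <-.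
Qed.

Lemma lmin_rank1_update_le (sB : seq R) : eigenvalues_list B sB -> lmin_nz sB <= c.
Proof.
move=> sBE; have [w yE] := rank1_update_range.
have symB : B^T = B by rewrite linearD /= trmx_mul trmxK symA.
have := range_rayleigh_ge symB sBE (@lmin_nz_le _ sB) yE.
have yu : y^T *m u = c%:M by rewrite -[LHS]trmxK trmx_mul trmxK tr_u_y tr_scalar_mx.
rewrite -mulmxA mulmxDl Ay add0r -mulmxA tr_u_y mul_mx_scalar -scalemxAr yu.
rewrite [X in _ <= X]mxE [X in _ <= c * X]mxE eqxx mulr1n.
by rewrite ler_pM2r // dotmx_gt0.
Qed.

End RankOneUpdate.

Theorem mainTheorem7 (R : rcfType) (n : nat) (A : 'M[R]_n) (u : 'cV[R]_n)
    (sA sB : seq R) :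
  psd A -> not_perp_ker A u ->
  eigenvalues_list A sA -> eigenvalues_list (A + u *m u^T) sB ->
  pdet sB >= lmin_nz sB * pdet sA.
Proof.
move=> psdA [z [Az uz]] sAE sBE.
case: n => [|n] in A u z Az uz psdA sAE sBE *.
  by move: uz; rewrite mxE big_ord0 eqxx.
have [symA _] := psdA.
have z0 : z != 0 by apply: contraNneq uz => ->; rewrite mulmx0 mxE.
have sA0 := psd_ker_eigen0 psdA sAE Az z0.
have : (0 < count (pred1 0%R) sA)%N.
  by rewrite -has_count; apply/hasP; exists 0%R; rewrite /= ?eqxx.
case E : (count _ sA) => [//|k] _.
have charA : char_poly A = 'X^(k.+1) * nzroot_poly sA by rewrite sAE prod_XsubC_split E.
have f0 := nzroot_poly_horner0_neq0 sA.
have [v [y [uE Ay]]] := ker_range_decomposition symA charA f0 u.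
have y0 : y != 0.
  by apply: contraNneq uz => y0; rewrite (tr_u_ker symA uE Az) y0 trmx0 mul0mx mxE.
rewrite (pdet_rank1_update symA charA f0 uE Ay y0 sAE sBE).
apply: ler_wpM2r; first exact (psd_pdet_ge0 psdA sAE).
exact (lmin_rank1_update_le symA uE Ay y0 sBE).
Qed.
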